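(* Let $X\subset\mathbb{R}^n$ be nonempty convex compact with $\|x_1-x_2\|_2\le D_X$, $c\in(0,1]$, $f(x)=\mathbb{E}[F(x,\xi)]$ $L_f$-Lipschitz on $X$, with oracle samples satisfying $\mathbb{E}\|F'(x,\xi)-f'(x)\|_2^2\le\sigma_f^2$ and $\mathbb{E}[(F(x,\xi)-f(x))^2]\le\beta^2$. Let $\delta>0$ and let $Y_\delta\subset\mathbb{R}$ be an interval of length $2(L_fD_X+\delta)$ such that $f(x)\in Y_\delta$ for all $x\in X$; let $\Lambda=[0,1]$. For $z>0$ define $\mathcal{L}'_x=\frac{2c}{z}(F(x,\xi)-y)_+F'(x,\xi)+\lambda F'(x,\xi)$, $\mathcal{L}'_y=-\frac{2c}{z}(F(x,\xi)-y)_++1-\lambda$, $\mathcal{L}'_z=-\frac c{z^2}(F(x,\xi)-y)_+^2+\frac c4$, $\mathcal{L}'_\lambda=F(x,\xi)-y$. Then for any $x\in X$, $y\in Y_\delta$, $z>0$, $\lambda\in\Lambda$: (a) $\mathbb{E}[(\mathcal{L}'_y)^2]\le\frac{12c^2}{z^2}[\beta^2+4(L_fD_X+\delta)^2]+3$; (b) $\mathbb{E}[(\mathcal{L}'_\lambda)^2]\le2\beta^2+8(L_fD_X+\delta)^2$; if moreover $\mathbb{E}[(F(x,\xi)-f(x))_+^4]\le M_f^4$ for all $x\in X$, then (d) $\mathbb{E}[(\mathcal{L}'_z)^2]\le\frac{12c^2}{z^4}[M_f^4+16(L_fD_X+\delta)^4]+\frac{3c^2}{16}$; and if, with $G(x,\xi)=(F(x,\xi)-f(x))_+^2$,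 $\mathbb{E}\|G'(x,\xi)\|_2^2\le L_G^2$ for all $x\in X$, then (c) $\mathbb{E}\|\mathcal{L}'_x\|_2^2\le\frac{3c^2}{z^2}[L_G^2+4L_f^2\beta^2+64(L_f^2+\sigma_f^2)(L_fD_X+\delta)^2]+12(L_f^2+\sigma_f^2)$.
   Context: $(a)_+=\max\{a,0\}$. $F(\cdot,\xi)$ is convex; $F'(x,\xi)$ is a stochastic subgradient returned by an oracle, unbiased for a subgradient $f'(x)$ of $f$; $F(x,\xi)$ is unbiased for $f(x)$. *)

From HB Require Import structures.
From mathcomp Require Import all_boot all_order all_algebra.
From mathcomp Require Import all_classical all_reals all_analysis.
Set Implicit Arguments. Unset Strict Implicit. Unset Printing Implicit Defensive.
Import Order.TTheory GRing.Theory Num.Theory.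
Import numFieldNormedType.Exports.
Local Open Scope ring_scope.
Local Open Scope classical_set_scope.

Section Defs.
Variable R : realType.

Definition pos_part (a : R) : R := Num.max a 0.

Definition dotv n (u v : 'rV[R]_n) : R := \sum_(i < n) u ord0 i * v ord0 i.
Definition sqnorm n (u : 'rV[R]_n) : R := dotv u u.
Definition enorm n (u : 'rV[R]_n) : R := Num.sqrt (sqnorm u).

Definition Lx n (c z lam y Fv : R) (Fd : 'rV[R]_n) : 'rV[R]_n :=
  (2 * c / z * pos_part (Fv - y)) *: Fd + lam *: Fd.
Definition Ly (c z lam y Fv : R) : R :=
  - (2 * c / z) * pos_part (Fv - y) + 1 - lam.
Definition Lz (c z y Fv : R) : R :=
  - (c / z ^+ 2) * pos_part (Fv - y) ^+ 2 + c / 4.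
Definition Llam (y Fv : R) : R := Fv - y.

(* stochastic gradient of G(x,xi) = (F(x,xi) - f(x))_+^2 (chain rule) *)
Definition Gd n (Fv fv : R) (Fd fd : 'rV[R]_n) : 'rV[R]_n :=
  (2 * pos_part (Fv - fv)) *: (Fd - fd).

End Defs.

From HB Require Import structures.
From mathcomp Require Import all_boot all_order all_algebra.
From mathcomp Require Import all_classical all_reals all_analysis.
From mathcomp Require Import measurable_realfun.
From mathcomp Require Import ring lra.
Import Order.TTheory GRing.Theory Num.Theory.
Import numFieldNormedType.Exports.
Local Open Scope ring_scope.
Local Open Scope classical_set_scope.

(* Since f(x) and y both lie in Y_delta, the shift f(x) - y is bounded by
   2K with K = L_f D_X + delta.  Each stochastic partial derivative is then
   bounded pointwise, via (a + b)^2 <= 2 (a^2 + b^2), its three-term analogue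
   and the 1-Lipschitz continuity of (.)_+, by a nonnegative combination of
   (F - f)^2, (F - f)_+^4, |F' - f'|^2, |G'|^2 and a constant; integrating
   gives the bounds.  For L'_x the combination comes from
     L'_x = (c/z) G' + (2c/z) (F - f)_+ f' + ((2c/z) ((F - y)_+ - (F - f)_+) + lam) F'. *)

Section square_bounds.
Context {R : realDomainType}.
Implicit Types s t r : R.

Lemma sqrD_le s t : (s + t) ^+ 2 <= 2 * (s ^+ 2 + t ^+ 2).
Proof. have := sqr_ge0 (s - t); nra. Qed.

Lemma sqrD3_le s t r : (s + t + r) ^+ 2 <= 3 * (s ^+ 2 + t ^+ 2 + r ^+ 2).
Proof.
have := sqr_ge0 (s - t); have := sqr_ge0 (t - r); have := sqr_ge0 (s - r); nra.
Qed.

Lemma expr4D_le s t : (s + t) ^+ 4 <= 8 * (s ^+ 4 + t ^+ 4).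
Proof.
rewrite -[4%N]/(2 * 2)%N !exprM.
have st2 := sqrD_le (s ^+ 2) (t ^+ 2).
suff : (s + t) ^+ 2 ^+ 2 <= (2 * (s ^+ 2 + t ^+ 2)) ^+ 2 by nra.
apply: lerXn2r; rewrite ?nnegrE ?sqrD_le ?sqr_ge0 //.
by rewrite mulr_ge0 ?addr_ge0 ?sqr_ge0.
Qed.

Lemma sqrB_le {s t : R} : 0 <= s * t -> (s - t) ^+ 2 <= s ^+ 2 + t ^+ 2.
Proof. nra. Qed.

Lemma sqr_le_of_norm {s t : R} : `|s| <= t -> s ^+ 2 <= t ^+ 2.
Proof. rewrite ler_norml => /andP[? ?]; nra. Qed.

End square_bounds.

Section pos_part.
Context {R : realType}.
Implicit Types s t : R.

Lemma pos_partE s : pos_part s = if s < 0 then 0 else s.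
Proof. by []. Qed.

Lemma pos_part_ge0 s : 0 <= pos_part s.
Proof. by rewrite pos_partE; case: ltP => //; rewrite ltW. Qed.

Lemma pos_part_sqr_le s : pos_part s ^+ 2 <= s ^+ 2.
Proof. by rewrite pos_partE; case: ltP => _; rewrite ?expr0n ?sqr_ge0. Qed.

Lemma dist_pos_part_le s t : `|pos_part s - pos_part t| <= `|s - t|.
Proof.
have := ler_norm (s - t); have := ler_norm (t - s); rewrite distrC => ? ?.
rewrite ler_norml !pos_partE; case: ltP => ?; case: ltP => ?; apply/andP; split; lra.
Qed.

Lemma measurable_pos_part d (T : measurableType d) (h : T -> R) :
  measurable_fun setT h -> measurable_fun setT (fun w => pos_part (h w)).
Proof. by move=> mh; exact: measurable_maxr mh (measurable_cst _). Qed.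

End pos_part.

Section sqnorm.
Context {R : realType} {n : nat}.
Implicit Types u v w : 'rV[R]_n.

Lemma sqnormE u : sqnorm u = \sum_(i < n) u ord0 i ^+ 2.
Proof. by apply: eq_bigr => i _; rewrite expr2. Qed.

Lemma sqnorm_ge0 u : 0 <= sqnorm u.
Proof. by rewrite sqnormE; apply: sumr_ge0 => i _; exact: sqr_ge0. Qed.

Lemma sqnormZ (k : R) u : sqnorm (k *: u) = k ^+ 2 * sqnorm u.
Proof. by rewrite !sqnormE mulr_sumr; apply: eq_bigr => i _; rewrite mxE exprMn. Qed.

Lemma sqnormD_le u v : sqnorm (u + v) <= 2 * (sqnorm u + sqnorm v).
Proof.
rewrite !sqnormE -big_split mulr_sumr /=; apply: ler_sum => i _.
by rewrite mxE; exact: sqrD_le.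
Qed.

Lemma sqnormD3_le u v w :
  sqnorm (u + v + w) <= 3 * (sqnorm u + sqnorm v + sqnorm w).
Proof.
rewrite !sqnormE -!big_split mulr_sumr /=; apply: ler_sum => i _.
by rewrite !mxE; exact: sqrD3_le.
Qed.

Lemma sqnorm_le_sqr {u} {L : R} : enorm u <= L -> sqnorm u <= L ^+ 2.
Proof.
move=> uL; rewrite -(sqr_sqrtr (sqnorm_ge0 u)).
by apply: sqr_le_of_norm; rewrite ger0_norm ?sqrtr_ge0.
Qed.

Lemma measurable_sqnorm d (T : measurableType d) (v : T -> 'rV[R]_n) :
  (forall i, measurable_fun setT (fun t => v t ord0 i)) ->
  measurable_fun setT (fun t => sqnorm (v t)).
Proof.
move=> mv; rewrite /sqnorm /dotv.
by apply: measurable_sum => i; exact: measurable_funM.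
Qed.

End sqnorm.

Section mean_le.
Context {R : realType} {d : measure_display} {T : measurableType d}.
Context {P : probability T R}.
Implicit Types (g h : T -> R) (B : R).

(* Measurability and nonnegativity are bundled so that the bound is stable
   under nonnegative combinations and pointwise domination. *)
Definition mean_le h B :=
  [/\ measurable_fun setT h, forall t, 0 <= h t
    & (\int[P]_t (h t)%:E <= B%:E)%E].

Lemma mean_le_cst {B} : 0 <= B -> mean_le (fun=> B) B.
Proof.
move=> B0; split=> //.
by rewrite integral_cst //= probability_setT mule1.
Qed.

Lemma mean_leZ {a : R} {h B} : 0 <= a -> mean_le h B ->
  mean_le (fun t => a * h t) (a * B).
Proof.
move=> a0 [mh h0 hB]; split=> [||].
- exact: measurable_funM (measurable_cst _) mh.
- by move=> t; rewrite mulr_ge0.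
- under eq_integral => t _ do rewrite EFinM.
  rewrite ge0_integralZl_EFin //; last exact/measurable_EFinP.
    by rewrite EFinM lee_wpmul2l ?lee_fin.
  by move=> t _; rewrite lee_fin.
Qed.

Lemma mean_leD {h1 h2 B1 B2} : mean_le h1 B1 -> mean_le h2 B2 ->
  mean_le (fun t => h1 t + h2 t) (B1 + B2).
Proof.
move=> [m1 p1 I1] [m2 p2 I2]; split=> [||].
- exact: measurable_funD.
- by move=> t; rewrite addr_ge0.
- under eq_integral => t _ do rewrite EFinD.
  rewrite ge0_integralD // ?EFinD ?leeD //.
  all: by [move=> t _; rewrite lee_fin | exact/measurable_EFinP].
Qed.

Lemma mean_le_dominated {h B g} : mean_le h B ->
  measurable_fun setT g -> (forall t, 0 <= g t) -> (forall t, g t <= h t) ->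
  mean_le g B.
Proof.
move=> [mh _ hB] mg g0 gh; split=> //; apply: le_trans hB.
apply: ge0_le_integral => //.
- by move=> t _; rewrite lee_fin.
- exact/measurable_EFinP.
- exact/measurable_EFinP.
- by move=> t _; rewrite lee_fin.
Qed.

End mean_le.

Arguments mean_le {R d T} P h B.
Arguments mean_le_cst {R d T} P {B}.

Section pointwise_bounds.
Context {R : realType} (c z : R) {lam y : R} (u : R) {fx K : R}.
Hypothesis fx_y : `|fx - y| <= 2 * K.

Let K_ge0 : 0 <= K.
Proof. by have := le_trans (normr_ge0 _) fx_y; rewrite pmulr_rge0. Qed.

Let shift_sqr : (fx - y) ^+ 2 <= 4 * K ^+ 2.
Proof. by rewrite (_ : 4 * K ^+ 2 = (2 * K) ^+ 2) ?sqr_le_of_norm //; ring. Qed.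

Let pos_part_shift : `|pos_part (u - y) - pos_part (u - fx)| <= 2 * K.
Proof.
apply: le_trans fx_y.
have -> : fx - y = u - y - (u - fx) by ring.
exact: dist_pos_part_le.
Qed.

Lemma Llam_sqr_le : Llam y u ^+ 2 <= 2 * (u - fx) ^+ 2 + 8 * K ^+ 2.
Proof.
have := sqrD_le (u - fx) (fx - y); rewrite /Llam addrA subrK.
have := shift_sqr; lra.
Qed.

Lemma Ly_sqr_le : 0 <= c -> 0 <= z -> 0 <= lam <= 1 ->
  Ly c z lam y u ^+ 2 <=
    8 * (c ^+ 2 / z ^+ 2) * (u - fx) ^+ 2
    + (32 * (c ^+ 2 / z ^+ 2) * K ^+ 2 + 1).
Proof.
move=> c0 z0 /andP[lam0 lam1].
set Q := c ^+ 2 / z ^+ 2; set p := pos_part (u - y).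
have Q0 : 0 <= Q by rewrite divr_ge0 ?sqr_ge0.
have Ap0 : 0 <= 2 * c / z * p by rewrite !mulr_ge0 ?invr_ge0 ?pos_part_ge0.
have -> : Ly c z lam y u = (1 - lam) - 2 * c / z * p by rewrite /Ly -/p; ring.
have lam' : 0 <= 1 - lam by rewrite subr_ge0.
apply: le_trans (sqrB_le (mulr_ge0 lam' Ap0)) _.
have -> : (2 * c / z * p) ^+ 2 = 4 * Q * p ^+ 2 by rewrite /Q !exprMn exprVn; ring.
have p2 : p ^+ 2 <= 2 * (u - fx) ^+ 2 + 8 * K ^+ 2.
  exact: le_trans (pos_part_sqr_le _) Llam_sqr_le.
have := ler_wpM2l Q0 p2; nra.
Qed.

Lemma Lz_sqr_le : Lz c z y u ^+ 2 <=
  8 * (c ^+ 2 / z ^+ 4) * pos_part (u - fx) ^+ 4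
  + (128 * (c ^+ 2 / z ^+ 4) * K ^+ 4 + c ^+ 2 / 16).
Proof.
set Q := c ^+ 2 / z ^+ 4; set p := pos_part (u - y); set q := pos_part (u - fx).
have Q0 : 0 <= Q by rewrite divr_ge0 ?exprn_even_ge0.
have p4 : p ^+ 4 <= 8 * q ^+ 4 + 128 * K ^+ 4.
  have pq : p <= q + 2 * K.
    by move: pos_part_shift; rewrite -/p -/q ler_norml; lra.
  apply: le_trans (_ : p ^+ 4 <= (q + 2 * K) ^+ 4) _.
    apply: lerXn2r pq; rewrite nnegrE ?pos_part_ge0 //.
    by rewrite addr_ge0 ?pos_part_ge0 ?mulr_ge0.
  by have := expr4D_le q (2 * K); rewrite exprMn; lra.
have -> : Lz c z y u = c / 4 - c / z ^+ 2 * p ^+ 2 by rewrite /Lz -/p; ring.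
have cp0 : 0 <= c / 4 * (c / z ^+ 2 * p ^+ 2).
  have -> : c / 4 * (c / z ^+ 2 * p ^+ 2) = (c ^+ 2 / z ^+ 2) * p ^+ 2 / 4 by ring.
  by rewrite divr_ge0 // mulr_ge0 ?sqr_ge0 // divr_ge0 ?sqr_ge0.
apply: le_trans (sqrB_le cp0) _.
have -> : (c / z ^+ 2 * p ^+ 2) ^+ 2 = Q * p ^+ 4.
  by rewrite /Q !exprMn exprVn -!exprM; ring.
have := ler_wpM2l Q0 p4; nra.
Qed.

Lemma Lx_sqnorm_le {n} (V g : 'rV[R]_n) {L : R} :
  0 <= lam <= 1 -> sqnorm g <= L ^+ 2 ->
  sqnorm (Lx c z lam y u V) <=
    3 * (c ^+ 2 / z ^+ 2) * sqnorm (Gd u fx V g)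
    + 12 * (c ^+ 2 / z ^+ 2) * L ^+ 2 * (u - fx) ^+ 2
    + (192 * (c ^+ 2 / z ^+ 2) * K ^+ 2 + 12) * (sqnorm (V - g) + L ^+ 2).
Proof.
move=> /andP[lam0 lam1] gL.
set Q := c ^+ 2 / z ^+ 2; set p := pos_part (u - y); set q := pos_part (u - fx).
have Q0 : 0 <= Q by rewrite divr_ge0 ?sqr_ge0.
have -> : Lx c z lam y u V =
    (c / z) *: Gd u fx V g + (2 * c / z * q) *: g + (2 * c / z * (p - q) + lam) *: V.
  by apply/rowP => i; rewrite !mxE -/p -/q; ring.
set G := Gd u fx V g.
apply: le_trans (sqnormD3_le _ _ _) _; rewrite !sqnormZ.
have -> : (c / z) ^+ 2 = Q by rewrite /Q exprMn exprVn.
have -> : (2 * c / z * q) ^+ 2 = 4 * Q * q ^+ 2 by rewrite /Q !exprMn exprVn; ring.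
have q2 : q ^+ 2 <= (u - fx) ^+ 2 := pos_part_sqr_le _.
have coefV : (2 * c / z * (p - q) + lam) ^+ 2 <= 32 * Q * K ^+ 2 + 2.
  apply: le_trans (sqrD_le _ _) _.
  have -> : (2 * c / z * (p - q)) ^+ 2 = 4 * Q * (p - q) ^+ 2.
    by rewrite /Q !exprMn exprVn; ring.
  have := ler_wpM2l Q0 (sqr_le_of_norm pos_part_shift).
  rewrite exprMn -/p -/q; nra.
have normV : sqnorm V <= 2 * (sqnorm (V - g) + L ^+ 2).
  by have := sqnormD_le (V - g) g; rewrite subrK; lra.
have gterm : q ^+ 2 * sqnorm g <= (u - fx) ^+ 2 * L ^+ 2.
  exact: ler_pM (sqr_ge0 _) (sqnorm_ge0 _) q2 gL.
have := ler_wpM2l Q0 gterm.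
have := ler_pM (sqr_ge0 _) (sqnorm_ge0 _) coefV normV.
lra.
Qed.

End pointwise_bounds.

Section second_moments.
Context {R : realType} {d : measure_display} {T : measurableType d}.
Context {P : probability T R} {n : nat}.
Context {F : T -> R} {Fd : T -> 'rV[R]_n} {fx : R} {g : 'rV[R]_n} {y K beta : R}.
Hypothesis mF : measurable_fun setT F.
Hypothesis mFd : forall i, measurable_fun setT (fun t => Fd t ord0 i).
Hypothesis fx_y : `|fx - y| <= 2 * K.
Hypothesis var_F : (\int[P]_t ((F t - fx) ^+ 2)%:E <= (beta ^+ 2)%:E)%E.

Let mF_sub r : measurable_fun setT (fun t => F t - r).
Proof. exact: measurable_funB mF (measurable_cst r). Qed.

Let mF_pos r : measurable_fun setT (fun t => pos_part (F t - r)).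
Proof. exact: measurable_pos_part (mF_sub r). Qed.

Let mean_dev_sqr : mean_le P (fun t => (F t - fx) ^+ 2) (beta ^+ 2).
Proof. by split=> // [|t]; [exact: measurable_funX | exact: sqr_ge0]. Qed.

Lemma Llam_second_moment :
  (\int[P]_t (Llam y (F t) ^+ 2)%:E <= (2 * beta ^+ 2 + 8 * K ^+ 2)%:E)%E.
Proof.
have K0 : 0 <= 8 * K ^+ 2 := mulr_ge0 (ler0n _ 8) (sqr_ge0 K).
have [_ _ /le_trans] := mean_le_dominated
  (mean_leD (mean_leZ (ler0n _ 2) mean_dev_sqr) (mean_le_cst P K0))
  (measurable_funX 2 (mF_sub y)) (fun t => sqr_ge0 _)
  (fun t => Llam_sqr_le (F t) fx_y).
by apply.
Qed.

Lemma Ly_second_moment {c z lam : R} : 0 <= c -> 0 <= z -> 0 <= lam <= 1 ->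
  (\int[P]_t (Ly c z lam y (F t) ^+ 2)%:E <=
     (12 * c ^+ 2 / z ^+ 2 * (beta ^+ 2 + 4 * K ^+ 2) + 3)%:E)%E.
Proof.
move=> c0 z0 lam01; set Q := c ^+ 2 / z ^+ 2.
have Q0 : 0 <= Q by rewrite divr_ge0 ?sqr_ge0.
have QK0 : 0 <= 32 * Q * K ^+ 2 + 1.
  exact: addr_ge0 (mulr_ge0 (mulr_ge0 (ler0n _ 32) Q0) (sqr_ge0 K)) ler01.
have mLy : measurable_fun setT (fun t => Ly c z lam y (F t) ^+ 2).
  apply: measurable_funX; apply: measurable_funB (measurable_cst _).
  apply: measurable_funD (measurable_cst _).
  exact: measurable_funM (measurable_cst _) (mF_pos y).
have [_ _ /le_trans] := mean_le_dominated
  (mean_leD (mean_leZ (mulr_ge0 (ler0n _ 8) Q0) mean_dev_sqr) (mean_le_cst P QK0))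
  mLy (fun t => sqr_ge0 _) (fun t => Ly_sqr_le c z (F t) fx_y c0 z0 lam01).
apply; rewrite lee_fin.
have := mulr_ge0 Q0 (sqr_ge0 beta); have := mulr_ge0 Q0 (sqr_ge0 K).
rewrite (_ : 12 * c ^+ 2 / z ^+ 2 = 12 * Q); last by rewrite /Q mulrA.
lra.
Qed.

Lemma Lz_second_moment c z {M : R} :
  (\int[P]_t (pos_part (F t - fx) ^+ 4)%:E <= (M ^+ 4)%:E)%E ->
  (\int[P]_t (Lz c z y (F t) ^+ 2)%:E <=
     (12 * c ^+ 2 / z ^+ 4 * (M ^+ 4 + 16 * K ^+ 4) + 3 * c ^+ 2 / 16)%:E)%E.
Proof.
move=> fourth_moment; set Q := c ^+ 2 / z ^+ 4.
have Q0 : 0 <= Q by rewrite divr_ge0 ?sqr_ge0 ?(@exprn_even_ge0 _ 4).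
have K4 : 0 <= K ^+ 4 := @exprn_even_ge0 _ 4 K isT.
have QK0 : 0 <= 128 * Q * K ^+ 4 + c ^+ 2 / 16.
  apply: addr_ge0 (mulr_ge0 (mulr_ge0 (ler0n _ 128) Q0) K4) _.
  exact: divr_ge0 (sqr_ge0 c) (ler0n _ 16).
have mean_pos4 : mean_le P (fun t => pos_part (F t - fx) ^+ 4) (M ^+ 4).
  by split=> // [|t]; [exact: measurable_funX | rewrite exprn_ge0 ?pos_part_ge0].
have mLz : measurable_fun setT (fun t => Lz c z y (F t) ^+ 2).
  apply: measurable_funX; apply: measurable_funD (measurable_cst _).
  exact: measurable_funM (measurable_cst _) (measurable_funX 2 (mF_pos y)).
have [_ _ /le_trans] := mean_le_dominated
  (mean_leD (mean_leZ (mulr_ge0 (ler0n _ 8) Q0) mean_pos4) (mean_le_cst P QK0))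
  mLz (fun t => sqr_ge0 _) (fun t => Lz_sqr_le c z (F t) fx_y).
apply; rewrite lee_fin.
have := mulr_ge0 Q0 (@exprn_even_ge0 _ 4 M isT); have := mulr_ge0 Q0 K4.
have := sqr_ge0 c.
rewrite (_ : 12 * c ^+ 2 / z ^+ 4 = 12 * Q); last by rewrite /Q mulrA.
lra.
Qed.

Lemma Lx_second_moment c z {lam sigma L LG : R} :
  0 <= lam <= 1 -> sqnorm g <= L ^+ 2 ->
  (\int[P]_t (sqnorm (Fd t - g))%:E <= (sigma ^+ 2)%:E)%E ->
  (\int[P]_t (sqnorm (Gd (F t) fx (Fd t) g))%:E <= (LG ^+ 2)%:E)%E ->
  (\int[P]_t (sqnorm (Lx c z lam y (F t) (Fd t)))%:E <=
     (3 * c ^+ 2 / z ^+ 2 * (LG ^+ 2 + 4 * L ^+ 2 * beta ^+ 2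
        + 64 * (L ^+ 2 + sigma ^+ 2) * K ^+ 2) + 12 * (L ^+ 2 + sigma ^+ 2))%:E)%E.
Proof.
move=> lam01 gL var_Fd mean_Gd; set Q := c ^+ 2 / z ^+ 2.
have Q0 : 0 <= Q by rewrite divr_ge0 ?sqr_ge0.
have mFd_sub i : measurable_fun setT (fun t => (Fd t - g) ord0 i).
  apply: eq_measurable_fun (measurable_funB (mFd i) (measurable_cst (g ord0 i))).
  by move=> t _; rewrite !mxE.
have mean_G : mean_le P (fun t => sqnorm (Gd (F t) fx (Fd t) g)) (LG ^+ 2).
  split=> // [|t]; last exact: sqnorm_ge0.
  apply: measurable_sqnorm => i.
  apply: eq_measurable_fun
    (measurable_funM (measurable_funM (measurable_cst (2 : R)) (mF_pos fx)) (mFd_sub i)).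
  by move=> t _; rewrite [RHS]mxE.
have mean_V : mean_le P (fun t => sqnorm (Fd t - g) + L ^+ 2) (sigma ^+ 2 + L ^+ 2).
  apply: mean_leD (mean_le_cst P (sqr_ge0 L)).
  by split=> // [|t]; [exact: measurable_sqnorm | exact: sqnorm_ge0].
have mLx : measurable_fun setT (fun t => sqnorm (Lx c z lam y (F t) (Fd t))).
  apply: measurable_sqnorm => i.
  apply: eq_measurable_fun (measurable_funD
    (measurable_funM (measurable_funM (measurable_cst (2 * c / z)) (mF_pos y)) (mFd i))
    (measurable_funM (measurable_cst lam) (mFd i))).
  by move=> t _; rewrite !mxE.
have a1 : 0 <= 3 * Q := mulr_ge0 (ler0n _ 3) Q0.
have a2 : 0 <= 12 * Q * L ^+ 2 := mulr_ge0 (mulr_ge0 (ler0n _ 12) Q0) (sqr_ge0 L).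
have a3 : 0 <= 192 * Q * K ^+ 2 + 12.
  exact: addr_ge0 (mulr_ge0 (mulr_ge0 (ler0n _ 192) Q0) (sqr_ge0 K)) (ler0n _ 12).
have [_ _ /le_trans] := mean_le_dominated
  (mean_leD (mean_leD (mean_leZ a1 mean_G) (mean_leZ a2 mean_dev_sqr))
     (mean_leZ a3 mean_V))
  mLx (fun t => sqnorm_ge0 _)
  (fun t => Lx_sqnorm_le c z (F t) fx_y (Fd t) g lam01 gL).
apply; rewrite lee_fin.
rewrite (_ : 3 * c ^+ 2 / z ^+ 2 = 3 * Q); last by rewrite /Q mulrA.
lra.
Qed.

End second_moments.

Theorem lemma4 (R : realType) (n : nat)
  (d : measure_display) (Omega : measurableType d) (P : probability Omega R)
  (X : set 'rV[R]_n) (DX c Lf sigmaf beta delta a : R)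
  (F : 'rV[R]_n -> Omega -> R) (Fd : 'rV[R]_n -> Omega -> 'rV[R]_n)
  (f : 'rV[R]_n -> R) (fd : 'rV[R]_n -> 'rV[R]_n) :
  X !=set0 -> convex_set X -> compact X ->
  (forall x1 x2, X x1 -> X x2 -> enorm (x1 - x2) <= DX) ->
  0 < c <= 1 ->
  (* F(., xi) convex; measurable oracle outputs *)
  (forall w, convex_function setT (F ^~ w)) ->
  (forall x, measurable_fun setT (F x)) ->
  (forall x (i : 'I_n), measurable_fun setT (fun w => Fd x w ord0 i)) ->
  (* f(x) = E[F(x, xi)] *)
  (forall x, X x -> P.-integrable setT (fun w => (F x w)%:E)) ->
  (forall x, X x -> (\int[P]_w (F x w)%:E = (f x)%:E)%E) ->
  (* f'(x) is a subgradient of f, and F'(x, xi) is unbiased for it *)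
  (forall x u, X x -> X u -> f x + dotv (fd x) (u - x) <= f u) ->
  (forall x (i : 'I_n), X x ->
     P.-integrable setT (fun w => (Fd x w ord0 i)%:E) /\
     (\int[P]_w (Fd x w ord0 i)%:E = (fd x ord0 i)%:E)%E) ->
  (* f is L_f-Lipschitz on X (values and subgradients) *)
  (forall x1 x2, X x1 -> X x2 -> `|f x1 - f x2| <= Lf * enorm (x1 - x2)) ->
  (forall x, X x -> enorm (fd x) <= Lf) ->
  (* variance bounds *)
  (forall x, X x ->
     (\int[P]_w (sqnorm (Fd x w - fd x))%:E <= (sigmaf ^+ 2)%:E)%E) ->
  (forall x, X x ->
     (\int[P]_w ((F x w - f x) ^+ 2)%:E <= (beta ^+ 2)%:E)%E) ->
  0 < delta ->
  (* Y_delta = [a, a + 2 (L_f D_X + delta)] contains f(X) *)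
  (forall x, X x -> a <= f x <= a + 2 * (Lf * DX + delta)) ->
  forall x y z lam,
  X x -> a <= y <= a + 2 * (Lf * DX + delta) -> 0 < z -> 0 <= lam <= 1 ->
  (* (a) *)
  (\int[P]_w ((Ly c z lam y (F x w)) ^+ 2)%:E <=
     (12 * c ^+ 2 / z ^+ 2 * (beta ^+ 2 + 4 * (Lf * DX + delta) ^+ 2) + 3)%:E)%E
  /\
  (* (b) *)
  (\int[P]_w ((Llam y (F x w)) ^+ 2)%:E <=
     (2 * beta ^+ 2 + 8 * (Lf * DX + delta) ^+ 2)%:E)%E
  /\
  (* (d) *)
  (forall Mf : R,
     (forall x', X x' ->
        (\int[P]_w ((pos_part (F x' w - f x')) ^+ 4)%:E <= (Mf ^+ 4)%:E)%E) ->
     (\int[P]_w ((Lz c z y (F x w)) ^+ 2)%:E <=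
        (12 * c ^+ 2 / z ^+ 4 * (Mf ^+ 4 + 16 * (Lf * DX + delta) ^+ 4)
         + 3 * c ^+ 2 / 16)%:E)%E)
  /\
  (* (c) *)
  (forall LG : R,
     (forall x', X x' ->
        (\int[P]_w (sqnorm (Gd (F x' w) (f x') (Fd x' w) (fd x')))%:E
           <= (LG ^+ 2)%:E)%E) ->
     (\int[P]_w (sqnorm (Lx c z lam y (F x w) (Fd x w)))%:E <=
        (3 * c ^+ 2 / z ^+ 2 *
           (LG ^+ 2 + 4 * Lf ^+ 2 * beta ^+ 2
            + 64 * (Lf ^+ 2 + sigmaf ^+ 2) * (Lf * DX + delta) ^+ 2)
         + 12 * (Lf ^+ 2 + sigmaf ^+ 2))%:E)%E).
Proof.
move=> _ _ _ _ /andP[c_gt0 _] _ mF mFd _ _ _ _ _ fd_le var_Fd var_F _ f_in_Y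
  x y z lam Xx y_in_Y z_gt0 lam01.
have fx_y : `|f x - y| <= 2 * (Lf * DX + delta).
  by move: (f_in_Y x Xx) y_in_Y => /andP[? ?] /andP[? ?]; rewrite ler_norml; lra.
have var_Fx := var_F x Xx.
split; [|split; [|split]].
- exact (Ly_second_moment (mF x) fx_y var_Fx (ltW c_gt0) (ltW z_gt0) lam01).
- exact (Llam_second_moment (mF x) fx_y var_Fx).
- move=> Mf fourth_moment.
  exact (Lz_second_moment (mF x) fx_y c z (fourth_moment x Xx)).
- move=> LG mean_Gd.
  exact (Lx_second_moment (mF x) (mFd x) fx_y var_Fx c z lam01
    (sqnorm_le_sqr (fd_le x Xx)) (var_Fd x Xx) (mean_Gd x Xx)).
Qed.
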